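(* For any symmetric design $P$: (1) $C_d$ is completely symmetric; (2) $\mathrm{tr}(C_d)=q_d^*$; (3) moreover, for any design $P$ (not necessarily symmetric) there exists a symmetric design with the same value of $q_d^*$.
   Context: Fix integers $p,t\ge2$, $n\ge1$ and a probability vector $\vec a=(a_1,\dots,a_p)$. Write $a_{jk}=\sum_{i=j}^ka_i$ ($a_{1,0}=0$, $a_{p+1,p}=0$), $\alpha_k=n^{-1}((n+1)a_k+a_{1,k-1}^{n+1}-a_{1k}^{n+1})$, $\beta_k=a_k+a_{k+1,p}a_{1k}^n-a_{kp}a_{1,k-1}^n$. $J_k$ is the $k\times k$ all-ones matrix, $B_k=I_k-J_k/k$, $B^k_p$ the $p\times p$ matrix with $B_k$ in its upper-left $k\times k$ block and zeros elsewhere; $A=\sum_k\alpha_kB^k_p$, $B=\sum_k\beta_kB^k_p$. $\mathcal S=\{1,\dots,t\}^p$; for $s=(t_1,\dots,t_p)$, $T_s$ is the $p\times t$ matrix with $(k,i)$ entry $1$ iff $t_k=i$, and $F_s$ the $p\times t$ matrix with zero first row and $(k,i)$ entry $1$ iff $t_{k-1}=i$ ($k\ge2$). A design is a probability vector $P=(p_s)_{s\in\mathcal S}$. With $\bar T=\sum_sp_sT_s$, $\bar F=\sum_sp_sF_s$: $C_{d11}=n(\sum_sp_sT_s'AT_s-\bar T'B\bar T)$, $C_{d12}=n(\sum_sp_sT_s'AF_s-\bar T'B\bar F)=C_{d21}'$, $C_{d22}=n(\sum_sp_sF_s'AF_s-\bar F'B\bar F)$, $C_d=C_{d11}-C_{d12}C_{d22}^-C_{d21}$.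 Let $\hat T_s=T_sB_t$, $\hat F_s=F_sB_t$, $q_{s11}=\mathrm{tr}(\hat T_s'A\hat T_s)$, $q_{s12}=\mathrm{tr}(\hat T_s'A\hat F_s)$, $q_{s22}=\mathrm{tr}(\hat F_s'A\hat F_s)$, $q_{dij}=n\sum_sp_sq_{sij}$, and $q_d^*=q_{d11}-q_{d12}^2/q_{d22}$ (equivalently $q_d^*=n\min_{x\in\mathbb R}\sum_sp_s(q_{s11}+2q_{s12}x+q_{s22}x^2)$). For a permutation $\sigma$ of $\{1,\dots,t\}$ let $\sigma s=(\sigma(t_1),\dots,\sigma(t_p))$; $P$ is symmetric if $p_{\sigma s}=p_s$ for all $\sigma$ and $s$. A $t\times t$ matrix is completely symmetric if it is of the form $aI_t+bJ_t$. *)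

From HB Require Import structures.
From mathcomp Require Import all_boot all_order all_algebra all_fingroup.
Set Implicit Arguments. Unset Strict Implicit. Unset Printing Implicit Defensive.
Import Order.TTheory GRing.Theory Num.Theory.
Local Open Scope ring_scope.

Section Defs.
Variables (R : realFieldType) (p t n : nat) (a : 'I_p -> R).

(* Rows k = 1..p of the paper are the ordinals 0..p-1; treatments 1..t are 0..t-1. *)

(* a_{1k}, a_{1,k-1}, a_{k+1,p}, a_{kp} for the paper's index k (= ordinal k + 1) *)
Definition a_1k (k : 'I_p) : R := \sum_(i < p | (i <= k)%N) a i.
Definition a_1km1 (k : 'I_p) : R := \sum_(i < p | (i < k)%N) a i.
Definition a_k1p (k : 'I_p) : R := \sum_(i < p | (k < i)%N) a i.
Definition a_kp (k : 'I_p) : R := \sum_(i < p | (k <= i)%N) a i.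

Definition alpha (k : 'I_p) : R :=
  (n%:R)^-1 * ((n.+1)%:R * a k + a_1km1 k ^+ n.+1 - a_1k k ^+ n.+1).
Definition beta (k : 'I_p) : R :=
  a k + a_k1p k * a_1k k ^+ n - a_kp k * a_1km1 k ^+ n.

Definition Bpk (k : 'I_p) : 'M[R]_p :=
  \matrix_(i < p, j < p)
    (if (i <= k)%N && (j <= k)%N then (i == j)%:R - ((k.+1)%:R)^-1 else 0).

Definition Amat : 'M[R]_p := \sum_(k < p) alpha k *: Bpk k.
Definition Bmat : 'M[R]_p := \sum_(k < p) beta k *: Bpk k.

Definition seqT := {ffun 'I_p -> 'I_t}.

Definition Tmat (s : seqT) : 'M[R]_(p, t) :=
  \matrix_(k < p, i < t) ((s k == i)%:R).
(* zero first row; row k (k >= 2) has a 1 in column t_{k-1} *)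
Definition Fmat (s : seqT) : 'M[R]_(p, t) :=
  \matrix_(k < p, i < t)
    ([exists k' : 'I_p, (k'.+1 == k :> nat) && (s k' == i)]%:R).

Definition design := {ffun seqT -> R}.
Definition is_design (P : design) : Prop :=
  (forall s, 0 <= P s) /\ \sum_s P s = 1.

Definition permseq (sigma : {perm 'I_t}) (s : seqT) : seqT :=
  [ffun k => sigma (s k)].
Definition symmetric_design (P : design) : Prop :=
  forall (sigma : {perm 'I_t}) (s : seqT), P (permseq sigma s) = P s.

Definition Tbar (P : design) : 'M[R]_(p, t) := \sum_s P s *: Tmat s.
Definition Fbar (P : design) : 'M[R]_(p, t) := \sum_s P s *: Fmat s.

Definition Cd11 (P : design) : 'M[R]_t :=
  n%:R *: (\sum_s P s *: ((Tmat s)^T *m Amat *m Tmat s)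
           - (Tbar P)^T *m Bmat *m Tbar P).
Definition Cd12 (P : design) : 'M[R]_t :=
  n%:R *: (\sum_s P s *: ((Tmat s)^T *m Amat *m Fmat s)
           - (Tbar P)^T *m Bmat *m Fbar P).
Definition Cd21 (P : design) : 'M[R]_t := (Cd12 P)^T.
Definition Cd22 (P : design) : 'M[R]_t :=
  n%:R *: (\sum_s P s *: ((Fmat s)^T *m Amat *m Fmat s)
           - (Fbar P)^T *m Bmat *m Fbar P).

Definition is_ginv (M G : 'M[R]_t) : Prop := M *m G *m M = M.

Definition Cd (P : design) (G : 'M[R]_t) : 'M[R]_t :=
  Cd11 P - Cd12 P *m G *m Cd21 P.

Definition Bt : 'M[R]_t := 1%:M - (t%:R)^-1 *: const_mx 1.
Definition That (s : seqT) : 'M[R]_(p, t) := Tmat s *m Bt.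
Definition Fhat (s : seqT) : 'M[R]_(p, t) := Fmat s *m Bt.

Definition qs11 (s : seqT) : R := \tr ((That s)^T *m Amat *m That s).
Definition qs12 (s : seqT) : R := \tr ((That s)^T *m Amat *m Fhat s).
Definition qs22 (s : seqT) : R := \tr ((Fhat s)^T *m Amat *m Fhat s).

Definition qd11 (P : design) : R := n%:R * \sum_s P s * qs11 s.
Definition qd12 (P : design) : R := n%:R * \sum_s P s * qs12 s.
Definition qd22 (P : design) : R := n%:R * \sum_s P s * qs22 s.

Definition qstar (P : design) : R := qd11 P - qd12 P ^+ 2 / qd22 P.

End Defs.

Definition completely_symmetric (R : ringType) (t : nat) (M : 'M[R]_t) : Prop :=
  exists c d : R, M = c%:M + d *: const_mx 1.

(* Relabelling the treatments by a permutation sigma replaces T_s and F_s by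
   T_s Q and F_s Q, Q the permutation matrix of sigma.  For a symmetric design
   every block C_dij is therefore invariant under conjugation by all
   permutation matrices, hence of the form c I + d J.  Since the rows of A and
   B sum to zero and T_s has exactly one 1 per row, C_d11 and C_d12 also kill
   the all-ones vector, so they are c11 B_t and c12 B_t; the Schur complement
   is then (c11 - c12^2/c22) B_t for every generalized inverse of C_d22, and
   tracing the blocks against B_t gives q_dij = (t - 1) c_ij.  The degenerate
   case c22 = 0 is handled by positive semidefiniteness of A (alpha_k >= 0
   because y^(n+1) - x^(n+1) <= (n+1)(y - x) on [0, 1]): the quadratic
   x |-> q_d11 + 2 x q_d12 + x^2 q_d22 is nonnegative, so q_d22 = 0 forces
   q_d12 = 0.  Finally, averaging any design over all relabellings gives a
   symmetric design with the same q_dij, since each q_sij is invariant. *)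

From Pilot Require Import Defs.
From HB Require Import structures.
From mathcomp Require Import all_boot all_order all_algebra all_fingroup.
From mathcomp Require Import ring lra.
Import Order.TTheory GRing.Theory Num.Theory.
Local Open Scope ring_scope.
Set Implicit Arguments. Unset Strict Implicit. Unset Printing Implicit Defensive.

Section PermutationMatrices.
Variables (R : nzRingType) (t : nat).

Lemma mulmx_perm_mxE m (M : 'M[R]_(m, t)) (s : {perm 'I_t}) k i :
  (M *m perm_mx s) k i = M k ((s^-1)%g i).
Proof. by rewrite -[s]invgK -col_permE invgK mxE. Qed.

Lemma perm_mx_conjE (M : 'M[R]_t) (s : {perm 'I_t}) i j :
  ((perm_mx s)^T *m M *m perm_mx s) i j = M ((s^-1)%g i) ((s^-1)%g j).
Proof. by rewrite mulmx_perm_mxE tr_perm_mx -row_permE mxE. Qed.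

Lemma perm_mx_mul_tr (s : {perm 'I_t}) : perm_mx s *m (perm_mx s)^T = 1%:M :> 'M[R]_t.
Proof. by rewrite tr_perm_mx -perm_mxM mulgV perm_mx1. Qed.

Lemma perm_conj_invariant_completely_symmetric (M : 'M[R]_t) : (1 < t)%N ->
  (forall s : {perm 'I_t}, (perm_mx s)^T *m M *m perm_mx s = M) ->
  completely_symmetric M.
Proof.
move=> t_gt1 Minv.
have {}Minv (s : {perm 'I_t}) i j : M (s i) (s j) = M i j.
  by rewrite -[in RHS](Minv (s^-1)%g) perm_mx_conjE invgK.
pose i0 : 'I_t := Ordinal (ltnW t_gt1); pose j0 : 'I_t := Ordinal t_gt1.
exists (M i0 i0 - M i0 j0), (M i0 j0); apply/matrixP => i j; rewrite !mxE mulr1.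
have [<-|nij] := eqVneq i j.
  by rewrite -(Minv (tperm i0 i) i0 i0) tpermL mulr1n subrK.
(* [s] maps [i0 |-> i] and [j0 |-> j], which is possible since [i != j]. *)
pose j1 := tperm i0 i j0.
have ij1 : i != j1 by rewrite /j1 -{1}(tpermL i0 i) (inj_eq perm_inj).
pose s := (tperm i0 i * tperm j1 j)%g.
have -> : i = s i0 by rewrite /s permM tpermL tpermD // eq_sym.
have -> : j = s j0 by rewrite /s permM -/j1 tpermL.
by rewrite Minv mulr0n add0r.
Qed.

End PermutationMatrices.

Section CenteringMatrix.
Variables (R : realFieldType) (t : nat).
Hypothesis t_gt0 : (0 < t)%N.

Local Notation J := (const_mx 1 : 'M[R]_t).
Local Notation Bt := (Bt R t).

Lemma const_mx1_mul m l :
  const_mx 1 *m (const_mx 1 : 'M[R]_(t, l)) = t%:R *: const_mx 1 :> 'M_(m, l).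
Proof.
apply/matrixP => i j; rewrite !mxE.
under eq_bigr do rewrite !mxE mulr1.
by rewrite sumr_const card_ord mulr1.
Qed.

Lemma natr_t_neq0 : t%:R != 0 :> R.
Proof. by rewrite pnatr_eq0 -lt0n. Qed.

Lemma const_mx1_mul_Bt : J *m Bt = 0.
Proof.
rewrite /Defs.Bt mulmxBr mulmx1 -scalemxAr const_mx1_mul scalerA.
by rewrite mulVf ?natr_t_neq0 // scale1r subrr.
Qed.

Lemma Bt_mul_const_mx1 : Bt *m J = 0.
Proof.
rewrite /Defs.Bt mulmxBl mul1mx -scalemxAl const_mx1_mul scalerA.
by rewrite mulVf ?natr_t_neq0 // scale1r subrr.
Qed.

Lemma Bt_idem : Bt *m Bt = Bt.
Proof. by rewrite {1}/Defs.Bt mulmxBl mul1mx -scalemxAl const_mx1_mul_Bt scaler0 subr0. Qed.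

Lemma trmx_Bt : Bt^T = Bt.
Proof. by apply/matrixP => i j; rewrite !mxE eq_sym. Qed.

Lemma mxtrace_Bt : \tr Bt = t%:R - 1.
Proof.
rewrite /Defs.Bt raddfB /= mxtraceZ mxtrace1 /mxtrace.
under eq_bigr do rewrite mxE.
by rewrite sumr_const card_ord mulVf ?natr_t_neq0.
Qed.

Lemma scale_Bt_completely_symmetric (c : R) : completely_symmetric (c *: Bt).
Proof.
exists c, (- (c / t%:R)).
by rewrite /Defs.Bt scalerBr scalemx1 scalerA scaleNr mulrC.
Qed.

Lemma perm_mx_Bt_comm (s : {perm 'I_t}) : perm_mx s *m Bt = Bt *m perm_mx s.
Proof.
have sJ : perm_mx s *m J = J by rewrite -row_permE; apply/matrixP => i j; rewrite !mxE.
have Js : J *m perm_mx s = J by apply/matrixP => i j; rewrite mulmx_perm_mxE !mxE.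
by rewrite /Defs.Bt mulmxBr mulmxBl mulmx1 mul1mx -scalemxAr -scalemxAl sJ Js.
Qed.

Lemma completely_symmetric_centered (M : 'M[R]_t) (c d : R) :
  M = c%:M + d *: J -> J *m M = 0 -> M = c *: Bt.
Proof.
move=> -> JM0; pose i0 : 'I_t := Ordinal t_gt0.
have /matrixP/(_ i0 i0) := JM0.
rewrite mulmxDr -scalemxAr const_mx1_mul mul_mx_scalar !mxE !mulr1 => e.
have -> : d = - (c / t%:R).
  by move/eqP: e; rewrite addr_eq0 => /eqP ->; rewrite mulNr opprK mulfK ?natr_t_neq0.
by rewrite /Defs.Bt scalerBr scalemx1 scalerA scaleNr mulrC.
Qed.

Lemma perm_invariant_mul_Bt m (M : 'M[R]_(m, t)) :
  (forall s : {perm 'I_t}, M *m perm_mx s = M) -> M *m Bt = 0.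
Proof.
move=> Minv; pose i0 : 'I_t := Ordinal t_gt0.
have Mconst k i : M k i = M k i0.
  by have /matrixP/(_ k i0) := Minv (tperm i i0); rewrite mulmx_perm_mxE tpermV tpermR.
apply/matrixP => k i; rewrite /Defs.Bt mulmxBr mulmx1 -scalemxAr !mxE.
under eq_bigr do rewrite !mxE mulr1 Mconst.
by rewrite sumr_const card_ord Mconst -[M k i0 *+ t]mulr_natl mulKf ?natr_t_neq0 // subrr.
Qed.

Lemma Bt_ginv_Bt (c d : R) (G : 'M[R]_t) : c != 0 ->
  is_ginv (c%:M + d *: J) G -> Bt *m G *m Bt = c^-1 *: Bt.
Proof.
move=> c_neq0 Gginv; set M := c%:M + d *: J in Gginv.
have BM : Bt *m M = c *: Bt.
  by rewrite mulmxDr mul_mx_scalar -scalemxAr Bt_mul_const_mx1 scaler0 addr0.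
have MB : M *m Bt = c *: Bt.
  by rewrite mulmxDl mul_scalar_mx -scalemxAl const_mx1_mul_Bt scaler0 addr0.
have : (Bt *m M) *m G *m (M *m Bt) = c *: Bt.
  have -> : (Bt *m M) *m G *m (M *m Bt) = Bt *m (M *m G *m M) *m Bt by rewrite !mulmxA.
  by rewrite Gginv -mulmxA MB -scalemxAr Bt_idem.
rewrite BM MB -scalemxAr -!scalemxAl scalerA => e.
apply: (@scalerI _ _ (c * c)); first by rewrite mulf_neq0.
by rewrite e scalerA -mulrA mulfV // mulr1.
Qed.

(* With [x / 0 = 0], the case [c22 = 0] of the formula needs [c12 = 0]. *)
Lemma schur_complement_centered (c11 c12 c22 d22 : R) (G : 'M[R]_t) :
  is_ginv (c22%:M + d22 *: J) G -> (c22 = 0 -> c12 = 0) ->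
  c11 *: Bt - (c12 *: Bt) *m G *m (c12 *: Bt)^T = (c11 - c12 ^+ 2 / c22) *: Bt.
Proof.
move=> Gginv c12_eq0; have -> : (c12 *: Bt)^T = c12 *: Bt by rewrite linearZ /= trmx_Bt.
rewrite -scalemxAr -!scalemxAl scalerA.
have [c22_0|c22_neq0] := eqVneq c22 0.
  by rewrite c12_eq0 // mul0r scale0r subr0 expr0n /= mul0r subr0.
by rewrite (Bt_ginv_Bt c22_neq0 Gginv) scalerA -scalerBl expr2.
Qed.

End CenteringMatrix.

Section PartialCenteringMatrices.
Variables (R : realFieldType) (p : nat).
Local Notation Bpk := (@Bpk R p).

Lemma sum_le_delta (k i : 'I_p) (f : 'I_p -> R) : (i <= k)%N ->
  \sum_(l < p | (l <= k)%N) (i == l)%:R * f l = f i.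
Proof.
move=> ik; rewrite (bigD1 i) //= eqxx mul1r big1 ?addr0 // => l /andP[_ ne].
by rewrite eq_sym (negbTE ne) mul0r.
Qed.

Lemma sum_le_const (k : 'I_p) (c : R) : \sum_(l < p | (l <= k)%N) c = k.+1%:R * c.
Proof.
rewrite (eq_bigl (fun l : 'I_p => (l < k.+1)%N)) //.
rewrite -(big_ord_widen_cond _ xpredT (fun _ => c) (ltn_ord k)).
by rewrite sumr_const card_ord mulr_natl.
Qed.

Lemma trmx_Bpk k : (Bpk k)^T = Bpk k.
Proof. by apply/matrixP => i j; rewrite !mxE andbC eq_sym. Qed.

Lemma Bpk_mul_const_mx1 m k : Bpk k *m const_mx 1 = 0 :> 'M[R]_(p, m).
Proof.
apply/matrixP => i j; rewrite !mxE.
under eq_bigr do rewrite !mxE mulr1.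
have [ik|ki] := leqP i k; last by rewrite big1 // => l _; rewrite leqNgt ki.
rewrite -big_mkcond /= sumrB.
under eq_bigr do rewrite -[(i == _)%:R]mulr1.
by rewrite sum_le_delta // sum_le_const mulfV ?pnatr_eq0 // subrr.
Qed.

Lemma const_mx1_mul_Bpk m k : const_mx 1 *m Bpk k = 0 :> 'M[R]_(m, p).
Proof. by apply: trmx_inj; rewrite trmx_mul trmx_Bpk trmx_const Bpk_mul_const_mx1 trmx0. Qed.

Lemma Bpk_idem k : Bpk k *m Bpk k = Bpk k.
Proof.
apply/matrixP => i j; rewrite !mxE.
under eq_bigr do rewrite !mxE.
have [ik|ki] := leqP i k; last by rewrite big1 // => l _; rewrite mul0r.
have [jk|kj] := leqP j k; last by rewrite big1 // => l _; rewrite andbF mulr0.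
rewrite (bigID (fun l : 'I_p => (l <= k)%N)) /= [X in _ + X]big1 ?addr0; last first.
  by move=> l /negbTE ->; rewrite mul0r.
under eq_bigr => l lk do rewrite lk /= mulrBr !mulrBl (eq_sym l j).
rewrite !sumrB sum_le_delta // sum_le_const.
under [X in _ - X - _]eq_bigr do rewrite mulrC.
by rewrite !sum_le_delta // mulrA mulfV ?pnatr_eq0 // mul1r subrr subr0 (eq_sym j).
Qed.

Lemma mxtrace_gram_ge0 m (M : 'M[R]_(p, m)) : 0 <= \tr (M^T *m M).
Proof.
apply: sumr_ge0 => i _; rewrite mxE.
by apply: sumr_ge0 => j _; rewrite mxE -expr2 sqr_ge0.
Qed.

Definition Bsum (w : 'I_p -> R) : 'M[R]_p := \sum_(k < p) w k *: Bpk k.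

Lemma trmx_Bsum w : (Bsum w)^T = Bsum w.
Proof. by rewrite raddf_sum; apply: eq_bigr => k _; rewrite /= linearZ /= trmx_Bpk. Qed.

Lemma const_mx1_mul_Bsum m w : const_mx 1 *m Bsum w = 0 :> 'M[R]_(m, p).
Proof.
by rewrite mulmx_sumr big1 // => k _; rewrite -scalemxAr const_mx1_mul_Bpk scaler0.
Qed.

Lemma Bsum_psd m w : (forall k, 0 <= w k) ->
  forall Y : 'M[R]_(p, m), 0 <= \tr (Y^T *m Bsum w *m Y).
Proof.
move=> w_ge0 Y; rewrite mulmx_sumr mulmx_suml raddf_sum /=.
apply: sumr_ge0 => k _; rewrite -scalemxAr -scalemxAl mxtraceZ mulr_ge0 //.
have -> : Y^T *m Bpk k *m Y = (Bpk k *m Y)^T *m (Bpk k *m Y).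
  by rewrite trmx_mul trmx_Bpk !mulmxA -[Y^T *m Bpk k *m Bpk k]mulmxA Bpk_idem.
exact: mxtrace_gram_ge0.
Qed.

End PartialCenteringMatrices.

Lemma expr_sub_le (R : realDomainType) (x y : R) m :
  0 <= x <= y -> y <= 1 -> y ^+ m - x ^+ m <= m%:R * (y - x).
Proof.
move=> /andP[x_ge0 xy] y_le1; have y_ge0 := le_trans x_ge0 xy.
rewrite subrXX mulrC ler_wpM2r ?subr_ge0 //.
rewrite -[m in m%:R]card_ord -sumr_const; apply: ler_sum => i _.
by rewrite mulr_ile1 ?exprn_ge0 ?exprn_ile1 // (le_trans xy).
Qed.

Section Weights.
Variables (R : realFieldType) (p n : nat) (a : 'I_p -> R).
Hypothesis a_ge0 : forall i, 0 <= a i.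
Hypothesis a_sum1 : \sum_(i < p) a i = 1.

Lemma a_1k_split k : a_1k a k = a_1km1 a k + a k.
Proof.
rewrite /a_1k /a_1km1 (bigD1 k) //= addrC; congr (_ + _).
by apply: eq_bigl => i; rewrite ltn_neqAle andbC.
Qed.

Lemma partial_sum_le1 (P : pred 'I_p) : \sum_(i < p | P i) a i <= 1.
Proof. by rewrite -a_sum1 big_mkcond /=; apply: ler_sum => i _; case: ifP. Qed.

Lemma alpha_ge0 k : 0 <= alpha n a k.
Proof.
rewrite /alpha mulr_ge0 ?invr_ge0 ?ler0n //.
have := @expr_sub_le _ (a_1km1 a k) (a_1k a k) n.+1.
rewrite partial_sum_le1 a_1k_split lerDl a_ge0 sumr_ge0 // [_ + a k]addrC addrK.
lra.
Qed.

Lemma Amat_psd m (Y : 'M[R]_(p, m)) : 0 <= \tr (Y^T *m Amat n a *m Y).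
Proof. exact: (Bsum_psd alpha_ge0). Qed.

End Weights.

Lemma affine_ge0_slope_eq0 (R : realFieldType) (b c : R) :
  (forall l, 0 <= b + l * c) -> c = 0.
Proof.
move=> ge0; apply/eqP/negPn/negP => c_neq0.
by have := ge0 (- (b + 1) / c); rewrite mulfVK //; lra.
Qed.

Section Designs.
Variables (R : realFieldType) (p t n : nat) (a : 'I_p -> R).
Hypothesis t_gt1 : (1 < t)%N.

Local Notation seqT := (seqT p t).
Local Notation design := (design R p t).
Local Notation Bt := (Bt R t).
Local Notation J := (const_mx 1 : 'M[R]_t).

Lemma permseq_inj (s : {perm 'I_t}) : injective (@permseq p t s).
Proof. by move=> x y /ffunP e; apply/ffunP => k; have := e k; rewrite !ffunE => /perm_inj. Qed.

Lemma permseqM (s u : {perm 'I_t}) (x : seqT) :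
  permseq s (permseq u x) = permseq (u * s)%g x.
Proof. by apply/ffunP => k; rewrite !ffunE permM. Qed.

Definition relabel_equivariant (M : seqT -> 'M[R]_(p, t)) :=
  forall (s : {perm 'I_t}) x, M (permseq s x) = M x *m perm_mx s.

Lemma perm_eq_inv (s : {perm 'I_t}) (x i : 'I_t) : (s x == i) = (x == (s^-1)%g i).
Proof. by rewrite -(inj_eq (@perm_inj _ (s^-1)%g)) permK. Qed.

Lemma Tmat_equivariant : relabel_equivariant (@Tmat R p t).
Proof. by move=> s x; apply/matrixP => k i; rewrite mulmx_perm_mxE !mxE ffunE perm_eq_inv. Qed.

Lemma Fmat_equivariant : relabel_equivariant (@Fmat R p t).
Proof.
move=> s x; apply/matrixP => k i; rewrite mulmx_perm_mxE !mxE.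
by under eq_existsb do rewrite ffunE perm_eq_inv.
Qed.

Lemma sum_permseq (V : lmodType R) (P : design) (f : seqT -> V) (s : {perm 'I_t}) :
  symmetric_design P -> \sum_x P x *: f (permseq s x) = \sum_x P x *: f x.
Proof.
move=> Psym; rewrite [RHS](reindex_inj (@permseq_inj s)) /=.
by apply: eq_bigr => x _; rewrite Psym.
Qed.

Lemma design_mean_perm (M : seqT -> 'M[R]_(p, t)) (P : design) (s : {perm 'I_t}) :
  relabel_equivariant M -> symmetric_design P ->
  (\sum_x P x *: M x) *m perm_mx s = \sum_x P x *: M x.
Proof.
move=> Meq Psym; rewrite mulmx_suml -[RHS](sum_permseq _ s Psym).
by apply: eq_bigr => x _; rewrite Meq scalemxAl.
Qed.

Lemma design_mean_mul_Bt (M : seqT -> 'M[R]_(p, t)) (P : design) :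
  relabel_equivariant M -> symmetric_design P -> (\sum_x P x *: M x) *m Bt = 0.
Proof.
by move=> Meq Psym; apply: (perm_invariant_mul_Bt (ltnW t_gt1)) => s; apply: design_mean_perm.
Qed.

(* [Cd11], [Cd12] and [Cd22] are [info_block] at [(T, T)], [(T, F)] and [(F, F)]. *)
Definition info_block (M1 M2 : seqT -> 'M[R]_(p, t)) (P : design) : 'M[R]_t :=
  n%:R *: (\sum_x P x *: ((M1 x)^T *m Amat n a *m M2 x)
    - (\sum_x P x *: M1 x)^T *m Bmat n a *m (\sum_x P x *: M2 x)).

Lemma info_block_perm_conj (M1 M2 : seqT -> 'M[R]_(p, t)) (P : design) s :
  relabel_equivariant M1 -> relabel_equivariant M2 -> symmetric_design P ->
  (perm_mx s)^T *m info_block M1 M2 P *m perm_mx s = info_block M1 M2 P.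
Proof.
move=> M1eq M2eq Psym.
rewrite -scalemxAr -scalemxAl mulmxBr mulmxBl; congr (_ *: (_ - _)).
  rewrite mulmx_sumr mulmx_suml -[RHS](sum_permseq _ s Psym).
  by apply: eq_bigr => x _; rewrite -scalemxAr -scalemxAl M1eq M2eq trmx_mul !mulmxA.
by rewrite -[in RHS](design_mean_perm s M1eq) // -[in RHS](design_mean_perm s M2eq) //
  trmx_mul !mulmxA.
Qed.

Lemma info_block_completely_symmetric (M1 M2 : seqT -> 'M[R]_(p, t)) (P : design) :
  relabel_equivariant M1 -> relabel_equivariant M2 -> symmetric_design P ->
  exists c d : R, info_block M1 M2 P = c%:M + d *: J.
Proof.
by move=> *; apply: perm_conj_invariant_completely_symmetric => // s; apply: info_block_perm_conj.
Qed.

Lemma Tmat_mul_const_mx1 m (x : seqT) : Tmat R x *m const_mx 1 = const_mx 1 :> 'M[R]_(p, m).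
Proof.
apply/matrixP => k j; rewrite !mxE.
under eq_bigr do rewrite !mxE mulr1.
rewrite (bigD1 (x k)) //= eqxx big1 ?addr0 // => i /negbTE.
by rewrite eq_sym => ->.
Qed.

Lemma const_mx1_mul_info_block_Tmat M2 (P : design) :
  J *m info_block (@Tmat R p t) M2 P = 0.
Proof.
have JTt (x : seqT) : J *m (Tmat R x)^T = const_mx 1.
  by apply: trmx_inj; rewrite trmx_mul !trmx_const trmxK Tmat_mul_const_mx1.
have JTbar : J *m (\sum_x P x *: Tmat R x)^T = (\sum_x P x) *: const_mx 1.
  rewrite raddf_sum mulmx_sumr scaler_suml; apply: eq_bigr => x _.
  by rewrite /= linearZ /= -scalemxAr JTt.
rewrite -scalemxAr mulmxBr mulmx_sumr big1 => [|x _]; last first.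
  by rewrite -scalemxAr !mulmxA JTt const_mx1_mul_Bsum !mul0mx scaler0.
by rewrite !mulmxA JTbar -scalemxAl const_mx1_mul_Bsum scaler0 mul0mx subrr scaler0.
Qed.

Definition qform (Y Z : 'M[R]_(p, t)) : R := \tr (Y^T *m Amat n a *m Z).

Lemma qform_sym Y Z : qform Z Y = qform Y Z.
Proof. by rewrite /qform -mxtrace_tr !trmx_mul trmxK trmx_Bsum mulmxA. Qed.

Lemma qform_add_scale Y Z (l : R) :
  qform (Y + l *: Z) (Y + l *: Z) = qform Y Y + 2 * l * qform Y Z + l ^+ 2 * qform Z Z.
Proof.
have YZ := qform_sym Y Z; rewrite /qform in YZ *.
have -> : (Y + l *: Z)^T = Y^T + l *: Z^T by apply/matrixP => i j; rewrite !mxE.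
rewrite !mulmxDl !mulmxDr -!scalemxAl -!scalemxAr.
rewrite !mxtraceD !mxtraceZ YZ; ring.
Qed.

Lemma qform_perm_Bt Y Z (s : {perm 'I_t}) :
  qform (Y *m perm_mx s *m Bt) (Z *m perm_mx s *m Bt) = qform (Y *m Bt) (Z *m Bt).
Proof.
rewrite /qform -!mulmxA !perm_mx_Bt_comm !mulmxA trmx_mul mxtrace_mulC !mulmxA.
by rewrite perm_mx_mul_tr mul1mx.
Qed.

Lemma mxtrace_info_block_Bt (M1 M2 : seqT -> 'M[R]_(p, t)) (P : design) :
  (\sum_x P x *: M2 x) *m Bt = 0 ->
  \tr (info_block M1 M2 P *m Bt) = n%:R * \sum_x P x * qform (M1 x *m Bt) (M2 x *m Bt).
Proof.
move=> M2B; rewrite -scalemxAl mxtraceZ mulmxBl -!mulmxA M2B !mulmx0 subr0.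
congr (_ * _); rewrite mulmx_suml raddf_sum /=; apply: eq_bigr => x _.
rewrite -scalemxAl mxtraceZ /qform trmx_mul trmx_Bt !mulmxA mxtrace_mulC !mulmxA.
by rewrite [in RHS]mxtrace_mulC !mulmxA Bt_idem // ltnW.
Qed.

Lemma Cd_blocks_symmetric (P : design) : symmetric_design P ->
  exists c11 c12 c22 d22 : R,
    [/\ Cd11 n a P = c11 *: Bt, Cd12 n a P = c12 *: Bt & Cd22 n a P = c22%:M + d22 *: J].
Proof.
move=> Psym; have t_gt0 := ltnW t_gt1.
have [c11 [d11 E11]] := info_block_completely_symmetric Tmat_equivariant Tmat_equivariant Psym.
have [c12 [d12 E12]] := info_block_completely_symmetric Tmat_equivariant Fmat_equivariant Psym.
have [c22 [d22 E22]] := info_block_completely_symmetric Fmat_equivariant Fmat_equivariant Psym.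
exists c11, c12, c22, d22; split => //.
- by apply: (completely_symmetric_centered t_gt0 E11); apply: const_mx1_mul_info_block_Tmat.
- by apply: (completely_symmetric_centered t_gt0 E12); apply: const_mx1_mul_info_block_Tmat.
Qed.

Lemma qd_mxtrace_Cd (P : design) : symmetric_design P ->
  [/\ qd11 n a P = \tr (Cd11 n a P *m Bt), qd12 n a P = \tr (Cd12 n a P *m Bt)
    & qd22 n a P = \tr (Cd22 n a P *m Bt)].
Proof.
move=> Psym; have Tmean := design_mean_mul_Bt Tmat_equivariant Psym.
have Fmean := design_mean_mul_Bt Fmat_equivariant Psym.
by split; rewrite mxtrace_info_block_Bt.
Qed.

Hypothesis a_ge0 : forall i, 0 <= a i.
Hypothesis a_sum1 : \sum_(i < p) a i = 1.

Lemma qd_quadratic_ge0 (P : design) l : (forall x, 0 <= P x) ->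
  0 <= qd11 n a P + 2 * l * qd12 n a P + l ^+ 2 * qd22 n a P.
Proof.
move=> P_ge0.
have -> : qd11 n a P + 2 * l * qd12 n a P + l ^+ 2 * qd22 n a P =
    n%:R * \sum_x P x * qform (That R x + l *: Fhat R x) (That R x + l *: Fhat R x).
  rewrite /qd11 /qd12 /qd22 !mulr_sumr -!big_split /=; apply: eq_bigr => x _.
  by rewrite qform_add_scale /qform /qs11 /qs12 /qs22; ring.
by rewrite mulr_ge0 ?ler0n ?sumr_ge0 // => x _; rewrite mulr_ge0 ?Amat_psd.
Qed.

Lemma qd12_eq0 (P : design) : (forall x, 0 <= P x) -> qd22 n a P = 0 -> qd12 n a P = 0.
Proof.
move=> P_ge0 q22; apply: (@affine_ge0_slope_eq0 _ (qd11 n a P)) => l.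
have := qd_quadratic_ge0 (l / 2) P_ge0.
by rewrite q22 mulr0 addr0 [2 * _]mulrC divfK ?pnatr_eq0.
Qed.

Lemma Cd_symmetric (P : design) (G : 'M[R]_t) :
  is_design P -> symmetric_design P -> is_ginv (Cd22 n a P) G ->
  completely_symmetric (Cd n a P G) /\ \tr (Cd n a P G) = qstar n a P.
Proof.
move=> [P_ge0 _] Psym Gginv; have t_gt0 := ltnW t_gt1.
have [c11 [c12 [c22 [d22 [E11 E12 E22]]]]] := Cd_blocks_symmetric Psym.
have [q11 q12 q22] := qd_mxtrace_Cd Psym.
rewrite E11 -scalemxAl Bt_idem // mxtraceZ mxtrace_Bt // in q11.
rewrite E12 -scalemxAl Bt_idem // mxtraceZ mxtrace_Bt // in q12.
rewrite E22 mulmxDl mul_scalar_mx -scalemxAl const_mx1_mul_Bt // scaler0 addr0 in q22.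
rewrite mxtraceZ mxtrace_Bt // in q22.
have t_sub1_neq0 : t%:R - 1 != 0 :> R.
  by rewrite subr_eq0 pnatr_eq1 gtn_eqF.
have c12_eq0 : c22 = 0 -> c12 = 0.
  move=> c22_0; move: (qd12_eq0 P_ge0); rewrite q12 q22 c22_0 mul0r => /(_ erefl)/eqP.
  by rewrite mulf_eq0 (negbTE t_sub1_neq0) orbF => /eqP.
rewrite E22 in Gginv.
have -> : Cd n a P G = (c11 - c12 ^+ 2 / c22) *: Bt.
  by rewrite /Cd /Cd21 E11 E12 (schur_complement_centered t_gt0 c11 Gginv).
split; first exact: scale_Bt_completely_symmetric.
rewrite mxtraceZ mxtrace_Bt // /qstar q11 q12 q22.
have [c22_0|c22_neq0] := eqVneq c22 0.
  by rewrite c12_eq0 // c22_0 !mul0r expr0n /= mul0r !subr0.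
by field; rewrite c22_neq0 t_sub1_neq0.
Qed.

End Designs.

Section Symmetrization.
Variables (R : realFieldType) (p t n : nat) (a : 'I_p -> R).
Local Notation seqT := (seqT p t).
Local Notation design := (design R p t).

Definition symmetrize (P : design) : design :=
  [ffun x => (#|{perm 'I_t}|%:R)^-1 * \sum_(s : {perm 'I_t}) P (permseq s x)].

Lemma sum_symmetrize (P : design) (f : seqT -> R) :
  (forall s x, f (permseq s x) = f x) ->
  \sum_x symmetrize P x * f x = \sum_x P x * f x.
Proof.
move=> f_inv; under eq_bigr do rewrite ffunE -mulrA mulr_suml.
rewrite -mulr_sumr exchange_big /= (eq_bigr (fun _ => \sum_x P x * f x)).
  rewrite sumr_const -[(\sum_x _) *+ _]mulr_natl mulKf // pnatr_eq0 -lt0n.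
  by apply/card_gt0P; exists 1%g.
move=> s _; rewrite (reindex_inj (@permseq_inj _ _ (s^-1)%g)) /=.
apply: eq_bigr => x _; rewrite f_inv permseqM mulVg.
by congr (P _ * _); apply/ffunP => k; rewrite ffunE perm1.
Qed.

Lemma symmetrize_design (P : design) : is_design P -> is_design (symmetrize P).
Proof.
move=> [P_ge0 P_sum1]; split.
  by move=> x; rewrite ffunE mulr_ge0 ?invr_ge0 ?ler0n ?sumr_ge0.
have := @sum_symmetrize P (fun _ => 1) (fun _ _ => erefl).
by under eq_bigr do rewrite mulr1; under [in RHS]eq_bigr do rewrite mulr1; move=> ->.
Qed.

Lemma symmetrize_symmetric (P : design) : symmetric_design (symmetrize P).
Proof.
move=> u x; rewrite !ffunE; congr (_ * _).
by rewrite [RHS](reindex_inj (mulgI u)); apply: eq_bigr => s _; rewrite permseqM.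
Qed.

Lemma qs_permseq (s : {perm 'I_t}) (x : seqT) :
  [/\ qs11 n a (permseq s x) = qs11 n a x, qs12 n a (permseq s x) = qs12 n a x
    & qs22 n a (permseq s x) = qs22 n a x].
Proof.
rewrite /qs11 /qs12 /qs22 /That /Fhat !Tmat_equivariant !Fmat_equivariant.
by split; apply: qform_perm_Bt.
Qed.

Lemma qstar_symmetrize (P : design) : qstar n a (symmetrize P) = qstar n a P.
Proof.
rewrite /qstar /qd11 /qd12 /qd22.
by rewrite !sum_symmetrize // => s x; case: (qs_permseq s x).
Qed.

End Symmetrization.

Theorem theorem3p2 (R : realFieldType) (p t n : nat) (a : 'I_p -> R) :
  (2 <= p)%N -> (2 <= t)%N -> (1 <= n)%N ->
  (forall i, 0 <= a i) -> \sum_(i < p) a i = 1 ->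
  (forall P : design R p t, is_design P -> symmetric_design P ->
     forall G : 'M[R]_t, is_ginv (Cd22 n a P) G ->
       completely_symmetric (Cd n a P G) /\ \tr (Cd n a P G) = qstar n a P)
  /\
  (forall P : design R p t, is_design P ->
     exists P' : design R p t,
       [/\ is_design P', symmetric_design P' & qstar n a P' = qstar n a P]).
Proof.
move=> _ t_gt1 _ a_ge0 a_sum1; split.
  by move=> P Pdesign Psym G; apply: Cd_symmetric.
move=> P Pdesign; exists (symmetrize P); split.
- exact: symmetrize_design.
- exact: symmetrize_symmetric.
- exact: qstar_symmetrize.
Qed.
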